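(* For every time horizon $T\in\mathbb N$, every algorithm for the two-bit feedback brokerage problem satisfies \[\sup_\nu R_T^\nu\ge\frac T9,\] where the supremum is over all probability distributions $\nu$ on $[0,1]$.
   Context: Brokerage setting: for $p,v_1,v_2\in[0,1]$ let $\mathrm{gft}(p,v_1,v_2):=(v_1\vee v_2-v_1\wedge v_2)\,\mathbb I\{v_1\wedge v_2\le p\le v_1\vee v_2\}$ ($\vee,\wedge$ = max, min). Valuations $V_1,V_2,\dots$ are i.i.d. with law $\nu$ on $[0,1]$; at round $t$ the algorithm posts $P_t\in[0,1]$ and obtains $\mathrm{GFT}_t(P_t)$ with $\mathrm{GFT}_t(q):=\mathrm{gft}(q,V_{2t-1},V_{2t})$. A two-bit feedback algorithm chooses $P_t$ as a function of the bits $\mathbb I\{P_s\le V_{2s-1}\},\mathbb I\{P_s\le V_{2s}\}$, $s<t$ (and possibly of internal randomness independent of the valuations). $R_T^\nu:=\sup_{p\in[0,1]}\mathbb E[\sum_{t=1}^T\mathrm{GFT}_t(p)]-\mathbb E[\sum_{t=1}^T\mathrm{GFT}_t(P_t)]$ when valuations have law $\nu$. *)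

From HB Require Import structures.
From mathcomp Require Import all_boot all_order all_algebra.
From mathcomp Require Import all_classical all_reals all_analysis.
Set Implicit Arguments. Unset Strict Implicit. Unset Printing Implicit Defensive.
Import Order.TTheory GRing.Theory Num.Theory.
Local Open Scope classical_set_scope.
Local Open Scope ring_scope.

Definition gft {R : realType} (p v1 v2 : R) : R :=
  if (Num.min v1 v2 <= p) && (p <= Num.max v1 v2)
  then Num.max v1 v2 - Num.min v1 v2 else 0.

(* A (deterministic, given its internal randomness) two-bit feedback policy:
   it maps the history of past feedback bits
   [:: (1{P_1 <= V_1}, 1{P_1 <= V_2}); ...; (1{P_{t-1} <= V_{2t-3}}, 1{P_{t-1} <= V_{2t-2}})]
   to the price P_t. *)
Definition policy (R : realType) := seq (bool * bool) -> R.

(* This is the expectation written as the iterated integral over the pair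
   (V_{2t-1}, V_{2t}) of each round. *)
Fixpoint exp_reward {R : realType} (nu : probability R R) (A : policy R)
    (h : seq (bool * bool)) (n : nat) : \bar R :=
  match n with
  | 0 => 0%E
  | n'.+1 =>
      let p := A h in
      (\int[nu]_v1 \int[nu]_v2
         ((gft p v1 v2)%:E + exp_reward nu A (rcons h ((p <= v1)%R, (p <= v2)%R)) n'))%E
  end.

(* Expected total gain E[sum_{t<=T} GFT_t(P_t)] of a randomized algorithm:
   alg w is the policy used when the internal randomness (independent of the
   valuations, with law Q on Omega) takes the value w. *)
Definition alg_reward {R : realType} {d : measure_display} {Omega : measurableType d}
    (Q : probability Omega R) (alg : Omega -> policy R)
    (nu : probability R R) (T : nat) : \bar R :=
  (\int[Q]_w exp_reward nu (alg w) [::] T)%E.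

Definition fixed_reward {R : realType} (nu : probability R R) (p : R) (T : nat)
  : \bar R := exp_reward nu (fun _ => p) [::] T.

Definition regret {R : realType} {d : measure_display} {Omega : measurableType d}
    (Q : probability Omega R) (alg : Omega -> policy R)
    (nu : probability R R) (T : nat) : \bar R :=
  (ereal_sup [set fixed_reward nu p T | p in `[0%R, 1%R]%classic]
   - alg_reward Q alg nu T)%E.

Definition prob_on01 {R : realType} (nu : probability R R) : Prop :=
  nu `[0%R, 1%R]%classic = 1%E.

Definition valid_alg {R : realType} {d : measure_display} {Omega : measurableType d}
    (alg : Omega -> policy R) : Prop :=
  (forall w h, alg w h \in `[0, 1]) /\
  (forall h, measurable_fun setT (fun w => alg w h)).

(* Let nu_x put mass 1/4 on 0 and on 1 and mass 1/2 on x, with x slightly above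
   1/2.  Under nu_x the price x earns 3/8 per round, while every other price
   earns at most 1/8 + x/4, so a policy that never posts exactly x loses about
   T/8 against the fixed price x.  A deterministic policy is a function of the
   history, and only the finitely many histories of length < T matter; summing
   over them the probability (over the internal randomness) that the posted
   price equals y gives a quantity whose sum over distinct values y is at most
   the number of histories.  Hence on a fine enough grid of [1/2, 1/2 + 1/100]
   some x has total hitting probability at most 1/100, and for that x the
   regret is at least T (1/4 - x/4 - 1/100) >= T/9. *)

From HB Require Import structures.
From mathcomp Require Import all_boot all_order all_algebra.
From mathcomp Require Import all_classical all_reals all_analysis.
From mathcomp Require Import measurable_realfun lra.
Import Order.TTheory GRing.Theory Num.Theory.
Local Open Scope classical_set_scope.
Local Open Scope ring_scope.

Section ge0_integral_monotone.
Context d (T : measurableType d) (R : realType) (m : {measure set T -> \bar R}).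
Local Open Scope ereal_scope.

Lemma le_ge0_integralT (f g : T -> \bar R) :
  (forall x, 0 <= f x) -> (forall x, f x <= g x) ->
  \int[m]_x f x <= \int[m]_x g x.
Proof.
move=> f0 fg; have g0 x : 0 <= g x := le_trans (f0 x) (fg x).
rewrite !ge0_integralTE//; apply: ereal_sup_le => _ [h /= hf <-].
by exists h => //= x; exact: le_trans (hf x) (fg x).
Qed.

End ge0_integral_monotone.

Lemma measurable_fun_cst_off_finite {R : realType} (S : set R) (f : R -> \bar R) (c : \bar R) :
  finite_set S -> (forall v, ~ S v -> f v = c) -> measurable_fun setT f.
Proof.
move=> fS fc _ Y mY; rewrite setTI.
have mS A : A `<=` S -> measurable A.
  move=> AS; apply: countable_measurable; first exact: measurable_set1.
  exact/finite_set_countable/(sub_finite_set AS).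
rewrite -[_ @^-1` _]setTI -(setUCr S) setIUl.
apply: measurableU; first by apply: mS; exact: subIsetl.
have [Yc|Yc] := pselect (Y c).
- suff -> : ~` S `&` f @^-1` Y = ~` S by apply: measurableC; exact: mS.
  by apply/seteqP; split=> [v []//|v Sv]; split=> //=; rewrite fc.
- suff -> : ~` S `&` f @^-1` Y = set0 by [].
  by apply/seteqP; split=> // v [Sv /=]; rewrite fc.
Qed.

Section hard_law.
Context {R : realType}.
Local Open Scope ereal_scope.

Definition three_point (x : R) : {measure set R -> \bar R} :=
  measure_add (measure_add \d_(0%R : R) \d_x) (measure_add \d_x \d_(1%R : R)).

Definition hard_law (x : R) : probability R R := mnormalize (three_point x) \d_(0%R : R).

Definition hard_mean (x : R) (f : R -> \bar R) : \bar R :=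
  (4^-1)%:E * (f 0%R + f x + (f x + f 1%R)).

Lemma hard_mean_le x (f g : R -> \bar R) :
  (forall v, f v <= g v) -> hard_mean x f <= hard_mean x g.
Proof.
move=> fg; apply: lee_wpmul2l; first by rewrite lee_fin invr_ge0.
by apply: leeD; apply: leeD.
Qed.

Lemma integral_three_point x (f : R -> \bar R) :
  (forall v, 0 <= f v) -> measurable_fun setT f ->
  \int[three_point x]_v f v = f 0%R + f x + (f x + f 1%R).
Proof.
move=> f0 mf; rewrite !ge0_integral_measure_add//.
by rewrite !integral_dirac// !diracT !mul1e.
Qed.

Lemma three_pointT x : three_point x setT = 4%:E.
Proof.
have := integral_cst (three_point x) measurableT 1.
by rewrite mul1e integral_three_point// => <-; rewrite -!EFinD; congr EFin; lra.
Qed.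

Lemma hard_lawE x A : hard_law x A = mscale ((4^-1 : R)%:nng)%R (three_point x) A.
Proof.
rewrite /hard_law /=; unfold mnormalize; rewrite three_pointT /mscale /=.
rewrite ifF; first by rewrite muleC.
by apply/negbTE; rewrite negb_or eqe; apply/andP; split => //; rewrite pnatr_eq0.
Qed.

Lemma integral_hard_law x (f : R -> \bar R) :
  (forall v, 0 <= f v) -> \int[hard_law x]_v f v = hard_mean x f.
Proof.
(* [f] need not be measurable: squeeze it between two measurable functions
   that agree with [f] on the support [{0, x, 1}]. *)
move=> f0; rewrite (eq_measure_integral (mscale ((4^-1 : R)%:nng)%R (three_point x)));
  last by move=> A _ _; exact: hard_lawE.
pose S := [set 0%R; x; 1%R].
have finS : finite_set S by rewrite !finite_setU; repeat split; exact: finite_set1.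
pose fill c v := if v \in S then f v else c.
have fill_ge0 c : 0 <= c -> forall v, 0 <= fill c v.
  by move=> c0 v; rewrite /fill; case: ifP.
have mfill c : measurable_fun setT (fill c).
  apply: (@measurable_fun_cst_off_finite _ _ _ c finS) => v Sv.
  by rewrite /fill ifF//; apply/negbTE; rewrite notin_setE.
have int_fill c : 0 <= c ->
    \int[mscale ((4^-1 : R)%:nng)%R (three_point x)]_v fill c v = hard_mean x f.
  move=> /fill_ge0 fc0.
  rewrite ge0_integral_mscale ?integral_three_point//.
  by rewrite /fill !mem_set //; rewrite /S /=; tauto.
apply/le_anti/andP; split.
- rewrite -(int_fill +oo)//; apply: le_ge0_integralT => // v.
  by rewrite /fill; case: ifP => // _; exact: leey.
- rewrite -(int_fill 0)//; apply: le_ge0_integralT; first exact: fill_ge0.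
  by move=> v; rewrite /fill; case: ifP.
Qed.

Lemma hard_law01 x : (0 <= x <= 1)%R -> prob_on01 (hard_law x).
Proof.
move=> /andP[x0 x1]; rewrite /prob_on01.
have := integral_indic (hard_law x) measurableT (measurable_itv `[0%R, 1%R]).
rewrite setIT => <-; rewrite integral_hard_law//.
rewrite /hard_mean !indicE !(mem_set (_ : `[0%R, 1%R]%classic _))/=
  ?in_itv/= ?lexx ?ler01 ?x0 ?x1//.
by rewrite -!EFinD -EFinM; congr EFin; lra.
Qed.

End hard_law.

Section gft.
Context {R : realType}.

Lemma gft_sorted (p a b : R) : a <= b ->
  gft p a b = if (a <= p) && (p <= b) then b - a else 0.
Proof. by move=> ab; rewrite /gft (min_idPl ab) (max_idPr ab). Qed.

Lemma gftC (p a b : R) : gft p a b = gft p b a.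
Proof. by rewrite /gft minC maxC. Qed.

Lemma gft_ge0 (p a b : R) : 0 <= gft p a b.
Proof.
wlog ab : a b / a <= b => [wlog|].
  by have [/wlog//|/ltW/wlog] := leP a b; rewrite gftC.
by rewrite gft_sorted//; case: ifP => // _; rewrite subr_ge0.
Qed.

Lemma gft_id (p a : R) : gft p a a = 0.
Proof. by rewrite /gft subrr; case: ifP. Qed.

(* Closed form of E[gft(p, V1, V2)] when V1, V2 are i.i.d. with law [hard_law x]. *)
Definition expected_gft (x p : R) : R :=
  8^-1 + (if p <= x then x / 4 else 0) + (if x <= p then (1 - x) / 4 else 0).

Lemma expected_gft_le (x p : R) : 0 <= x <= 1 -> expected_gft x p <= 3 / 8.
Proof.
move=> /andP[x0 x1]; rewrite /expected_gft.
by case: (lerP p x) => px; case: (lerP x p) => xp /=; lra.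
Qed.

Lemma expected_gft_neq (x p : R) : 2^-1 <= x -> p != x -> expected_gft x p <= 8^-1 + x / 4.
Proof.
move=> x_ge pNx; rewrite /expected_gft.
by case: (lerP p x) => px; case: (lerP x p) => xp /=; lra.
Qed.

Lemma expected_gft_id (x : R) : expected_gft x x = 3 / 8.
Proof. by rewrite /expected_gft lexx; lra. Qed.

End gft.

Section exp_reward_hard_law.
Context {R : realType}.
Implicit Types (x : R) (A : policy R) (h : seq (bool * bool)).
Local Open Scope ereal_scope.

Lemma exp_reward_ge0 (nu : probability R R) A h n : 0 <= exp_reward nu A h n.
Proof.
elim: n h => [|n IH] h //=.
apply: integral_ge0 => v1 _; apply: integral_ge0 => v2 _.
by apply: adde_ge0 => //; rewrite lee_fin gft_ge0.
Qed.

Lemma hard_mean_gft x p (B : R) : (0 <= x <= 1)%R -> (0 <= p <= 1)%R ->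
  hard_mean x (fun v1 => hard_mean x (fun v2 => (gft p v1 v2 + B)%:E)) =
    (expected_gft x p + B)%:E.
Proof.
move=> /andP[x0 x1] /andP[p0 p1]; rewrite /hard_mean -!EFinD -!EFinM; congr EFin.
rewrite !gft_id (gftC p x 0) (gftC p 1 0) (gftC p 1 x).
rewrite (gft_sorted p _ _ x0) (gft_sorted p _ _ x1) (gft_sorted p 0 1 ler01) p0 p1.
rewrite /expected_gft /=.
by case: (lerP p x) => px; case: (lerP x p) => xp /=; lra.
Qed.

Lemma exp_reward_hard_lawS x A h n :
  exp_reward (hard_law x) A h n.+1 =
  hard_mean x (fun v1 => hard_mean x (fun v2 => (gft (A h) v1 v2)%:E +
    exp_reward (hard_law x) A (rcons h ((A h <= v1)%R, (A h <= v2)%R)) n)).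
Proof.
have f_ge0 v1 v2 : 0 <= (gft (A h) v1 v2)%:E +
    exp_reward (hard_law x) A (rcons h ((A h <= v1)%R, (A h <= v2)%R)) n.
  by apply: adde_ge0; [rewrite lee_fin gft_ge0|exact: exp_reward_ge0].
rewrite /= integral_hard_law => [|v1]; last exact: integral_ge0.
by congr hard_mean; apply: funext => v1; exact: integral_hard_law.
Qed.

Lemma exp_reward_hard_law_le x A (c : R) : (0 <= x <= 1)%R -> (forall h, 0 <= A h <= 1)%R ->
  forall n h, (forall h', (size h' < size h + n)%N -> expected_gft x (A h') <= c)%R ->
  exp_reward (hard_law x) A h n <= (n%:R * c)%:E.
Proof.
move=> x01 A01; elim=> [|n IH] h Ac; first by rewrite mul0r.
have IHb b : exp_reward (hard_law x) A (rcons h b) n <= (n%:R * c)%:E.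
  by apply: IH => h'; rewrite size_rcons addSnnS => /Ac.
rewrite exp_reward_hard_lawS; apply: (@le_trans _ _ (expected_gft x (A h) + n%:R * c)%:E).
  rewrite -hard_mean_gft//; apply: hard_mean_le => v1; apply: hard_mean_le => v2.
  by rewrite EFinD leeD2l.
by rewrite lee_fin -natr1 mulrDl mul1r addrC lerD2l Ac// addnS ltnS leq_addr.
Qed.

Lemma exp_reward_hard_law_cst x n h : (0 <= x <= 1)%R ->
  exp_reward (hard_law x) (fun=> x) h n = (n%:R * (3 / 8))%:E.
Proof.
move=> x01; elim: n h => [|n IH] h; first by rewrite mul0r.
rewrite exp_reward_hard_lawS.
under eq_fun do under eq_fun do rewrite IH -EFinD.
by rewrite hard_mean_gft// expected_gft_id -natr1; congr EFin; lra.
Qed.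

(* Either the policy posts [x] somewhere in its first [T] rounds, which the
   count term pays for, or it never does and each round loses [1/4 - x/4]. *)
Lemma exp_reward_hard_law_le_hits x A (H : seq (seq (bool * bool))) T :
  (2^-1 <= x <= 1)%R -> (forall h, 0 <= A h <= 1)%R ->
  (forall h, (size h < T)%N -> h \in H) ->
  exp_reward (hard_law x) A [::] T <=
    (T%:R * (8^-1 + x / 4 + \sum_(h <- H) (A h == x)%:R))%:E.
Proof.
move=> /andP[x_ge x1] A01 HT.
have x01 : (0 <= x <= 1)%R by apply/andP; split=> //; lra.
have sum_ge0 : (0 <= \sum_(h <- H) (A h == x)%:R :> R)%R by exact: sumr_ge0.
have [/hasP[h0 h0H /eqP Ah0]|miss] := boolP (has (fun h => A h == x) H).
- apply: le_trans (exp_reward_hard_law_le x A (3 / 8) x01 A01 T [::] _) _.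
    by move=> h' _; exact: expected_gft_le.
  have : (1 <= \sum_(h <- H) (A h == x)%:R :> R)%R.
    by rewrite (big_rem h0)//= Ah0 eqxx lerDl; exact: sumr_ge0.
  by rewrite lee_fin => s1; apply: ler_wpM2l => //; lra.
- apply: le_trans (exp_reward_hard_law_le x A (8^-1 + x / 4) x01 A01 T [::] _) _.
    move=> h' /HT h'H; apply: expected_gft_neq => //; apply: contraNN miss => /eqP Ah'.
    by apply/hasP; exists h'; rewrite ?Ah'.
  by rewrite lee_fin; apply: ler_wpM2l => //; rewrite lerDl.
Qed.

End exp_reward_hard_law.

Fixpoint seqs_upto (T : finType) (n : nat) : seq (seq T) :=
  if n is n'.+1 then [::] :: [seq t :: s | t <- enum T, s <- seqs_upto T n']
  else [:: [::]].

Lemma mem_seqs_upto (T : finType) n (s : seq T) : (size s <= n)%N -> s \in seqs_upto T n.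
Proof.
elim: n s => [|n IH] [|t s] //=; rewrite ?inE ?eqxx// ltnS => /IH s_in.
by apply/orP; right; apply: (allpairs_f (fun t s => t :: s)) => //; rewrite mem_enum.
Qed.

Section rare_value.
Context {d} {Omega : measurableType d} {R : realType} (Q : probability Omega R).
Local Open Scope ereal_scope.

Definition hits {I : Type} (s : seq I) (f : I -> Omega -> R) (y : R) : \bar R :=
  \sum_(i <- s) Q (f i @^-1` [set y]).

Lemma indic_preimage_set1 (f : Omega -> R) (y : R) w :
  ((f w == y)%:R)%:E = (\1_(f @^-1` [set y]) w)%:E :> \bar R.
Proof.
rewrite indicE; have [/set_mem/= ->|wN] := boolP (w \in _); first by rewrite eqxx.
by case: eqP => // fy; case/negP: wN; exact: mem_set.
Qed.

Lemma measurable_count_eq {I : Type} (s : seq I) (f : I -> Omega -> R) (y : R) :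
  (forall i, measurable_fun setT (f i)) ->
  measurable_fun setT (fun w => (\sum_(i <- s) (f i w == y)%:R : R)%:E).
Proof.
move=> mf; under eq_fun do rewrite -sumEFin; apply: emeasurable_sum => i.
under eq_fun do rewrite indic_preimage_set1; apply/measurable_EFinP/measurable_indic.
by rewrite -[X in measurable X]setTI; exact: mf.
Qed.

Lemma integral_count_eq {I : Type} (s : seq I) (f : I -> Omega -> R) (y : R) :
  (forall i, measurable_fun setT (f i)) ->
  \int[Q]_w (\sum_(i <- s) (f i w == y)%:R : R)%:E = hits s f y.
Proof.
move=> mf; have mpre i : measurable (f i @^-1` [set y]).
  by rewrite -[X in measurable X]setTI; exact: mf.
under eq_integral do rewrite -sumEFin; rewrite ge0_integral_sum//.
- apply: eq_bigr => i _; under eq_integral do rewrite indic_preimage_set1.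
  by rewrite integral_indic ?setIT.
- move=> i; under eq_fun do rewrite indic_preimage_set1.
  exact/measurable_EFinP/measurable_indic.
Qed.

Lemma sum_hits_le {I : Type} (s : seq I) (f : I -> Omega -> R) (ys : nat -> R) K :
  (forall i, measurable_fun setT (f i)) -> injective ys ->
  \sum_(k < K) hits s f (ys k) <= (size s)%:R%:E.
Proof.
move=> mf ys_inj; rewrite /hits exchange_big /= -sum1_size natr_sum -sumEFin.
apply: lee_sum => i _.
have mpre k : measurable (f i @^-1` [set ys k]).
  by rewrite -[X in measurable X]setTI; exact: mf.
have disj : trivIset setT (fun k => f i @^-1` [set ys k]).
  by move=> k k' _ _ [w [/= fk fk']]; apply: ys_inj; rewrite -fk -fk'.
rewrite -(@measure_bigsetU _ _ _ Q _ mpre disj); apply: probability_le1.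
exact: bigsetU_measurable.
Qed.

Lemma exists_le_mean (F : nat -> \bar R) K (c : R) : (0 < K)%N ->
  \sum_(k < K) F k <= c%:E -> exists2 k, (k < K)%N & F k <= (c / K%:R)%:E.
Proof.
case: K => // K _ sumF.
have [k _ kmin] := @arg_minP _ _ _ ord0 xpredT (fun k : 'I_K.+1 => F k) isT.
exists k => //; rewrite EFinM lee_pdivlMr ?ltr0n// muleC mule_natl.
have <- : \sum_(i < K.+1) F k = F k *+ K.+1 by rewrite sumr_const card_ord.
by apply: le_trans sumF; apply: lee_sum => i _; exact: kmin.
Qed.

Lemma exists_rare_value {I : Type} (s : seq I) (f : I -> Omega -> R) (a b : R) K :
  (forall i, measurable_fun setT (f i)) -> (a < b)%R -> (0 < K)%N ->
  exists2 y, (a <= y <= b)%R & hits s f y <= ((size s)%:R / K%:R)%:E.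
Proof.
move=> mf ab K0; pose ys k := (a + (b - a) * (k%:R / K%:R))%R.
have ys_inj : injective ys.
  move=> k k' /addrI/mulfI; rewrite subr_eq0 gt_eqF// => /(_ isT) /(congr1 ( *%R^~ K%:R)).
  by rewrite !divfK ?pnatr_eq0 -?lt0n// => /eqP; rewrite eqr_nat => /eqP.
have [k kK hk] :=
  exists_le_mean (fun k => hits s f (ys k)) _ _ K0 (sum_hits_le s f ys K mf ys_inj).
exists (ys k) => //; have ab0 : (0 <= b - a)%R by rewrite subr_ge0 ltW.
have q0 : (0 <= k%:R / K%:R :> R)%R by rewrite divr_ge0.
have q1 : (k%:R / K%:R <= 1 :> R)%R by rewrite ler_pdivrMr ?ltr0n// mul1r ler_nat ltnW.
have := mulr_ge0 ab0 q0; have := ler_wpM2l ab0 q1.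
by rewrite /ys mulr1 => ? ?; apply/andP; split; lra.
Qed.

End rare_value.

Lemma alg_reward_hard_law_le {R : realType} {d} {Omega : measurableType d}
    (Q : probability Omega R) (alg : Omega -> policy R) (x : R) T
    (H : seq (seq (bool * bool))) :
  valid_alg alg -> (2^-1 <= x <= 1)%R -> (forall h, (size h < T)%N -> h \in H) ->
  (alg_reward Q alg (hard_law x) T <=
    (T%:R * (8^-1 + x / 4))%:E + T%:R%:E * hits Q H (fun h w => alg w h) x)%E.
Proof.
move=> [alg01 malg] x_range HT; have /andP[x_ge _] := x_range.
have A01 w h : (0 <= alg w h <= 1)%R by have := alg01 w h; rewrite in_itv.
pose N w := (\sum_(h <- H) (alg w h == x)%:R : R)%R.
have mN : measurable_fun setT (fun w => (N w)%:E) by exact: measurable_count_eq.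
have N_ge0 w : (0 <= (N w)%:E)%E by rewrite lee_fin sumr_ge0.
have c_ge0 : (0 <= T%:R * (8^-1 + x / 4) :> R)%R by apply: mulr_ge0 => //; lra.
apply: (@le_trans _ _ (\int[Q]_w ((T%:R * (8^-1 + x / 4))%:E + T%:R%:E * (N w)%:E))%E).
  apply: le_ge0_integralT => w; first exact: exp_reward_ge0.
  by rewrite -EFinM -EFinD -mulrDr; exact: exp_reward_hard_law_le_hits.
rewrite ge0_integralD//; last 2 first.
- by move=> w _; apply: mule_ge0.
- exact: measurable_funeM.
rewrite le_eqVlt; apply/orP; left; apply/eqP; congr (_ + _)%E.
  by rewrite integral_cst// -[RHS]mule1; congr (_ * _)%E; exact: probability_setT.
by rewrite ge0_integralZl_EFin// integral_count_eq.
Qed.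

Lemma regret_hard_law_ge {R : realType} {d} {Omega : measurableType d}
    (Q : probability Omega R) (alg : Omega -> policy R) (x c : R) T
    (H : seq (seq (bool * bool))) :
  valid_alg alg -> (2^-1 <= x <= 1)%R -> (forall h, (size h < T)%N -> h \in H) ->
  (hits Q H (fun h w => alg w h) x <= c%:E)%E ->
  ((T%:R * (4^-1 - x / 4 - c))%:E <= regret Q alg (hard_law x) T)%E.
Proof.
move=> alg_valid x_range HT s_le; have /andP[x_ge x_le] := x_range.
have sup_ge : ((T%:R * (3 / 8))%:E <=
    ereal_sup [set fixed_reward (hard_law x) p T | p in `[0%R, 1%R]%classic])%E.
  apply: ereal_sup_ubound; exists x; first by rewrite /= in_itv/=; apply/andP; split; lra.
  by apply: exp_reward_hard_law_cst; apply/andP; split; lra.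
apply: le_trans (leeB sup_ge (alg_reward_hard_law_le Q alg _ _ _ alg_valid x_range HT)).
set s := hits _ _ _ _ in s_le *.
have s_ge0 : (0 <= s)%E by apply: sume_ge0 => h _; exact: measure_ge0.
have s_fin : s \is a fin_num by rewrite ge0_fin_numE// (le_lt_trans s_le) ?ltry.
have fs_le : (fine s <= c)%R by rewrite -lee_fin fineK.
rewrite -(fineK s_fin) -EFinM -EFinD lee_fin -mulrDr -!mulrBr ler_wpM2l//.
by lra.
Qed.

Theorem theorem5p4 (R : realType) (T : nat) (d : measure_display)
    (Omega : measurableType d) (Q : probability Omega R)
    (alg : Omega -> policy R) :
  valid_alg alg ->
  (ereal_sup [set regret Q alg nu T | nu in [set nu : probability R R | prob_on01 nu]]
    >= (T%:R / 9 : R)%:E)%E.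
Proof.
move=> alg_valid; have [_ malg] := alg_valid.
pose H := seqs_upto (bool * bool)%type T.
have HT h : (size h < T)%N -> h \in H by move/ltnW; exact: mem_seqs_upto.
have [x /andP[x_ge x_le] x_rare] := @exists_rare_value _ _ _ Q _ H (fun h w => alg w h)
  2^-1 (2^-1 + 100^-1) (100 * size H).+1 malg ltac:(lra) isT.
have rare : (hits Q H (fun h w => alg w h) x <= (100^-1 : R)%:E)%E.
  apply: le_trans x_rare _; rewrite lee_fin ler_pdivrMr ?ltr0n// [X in _ * X]mulrSr natrM.
  by have : (0 <= (size H)%:R :> R)%R by []; lra.
have x_range : (2^-1 <= x <= 1)%R by apply/andP; split=> //; lra.
apply: le_trans (ereal_sup_ubound _); last first.
  by exists (hard_law x) => //; apply: hard_law01; apply/andP; split; lra.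
apply: le_trans (regret_hard_law_ge Q alg _ _ _ _ alg_valid x_range HT rare).
by rewrite lee_fin ler_wpM2l//; lra.
Qed.
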